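(* Let $\delta>0$ and let $b>0$ be an integer. Suppose that $M$ is a $(\delta,b)$-map of perimeter $n$ and that every vertex of $M$ is at distance at most $r$ from a boundary vertex, or from a non-flat interior vertex, or from a vertex of a non-flat face of $M$. Then $\mathrm{Area}(M)\le Ln$, where $L$ depends only on $\delta,b,r$ and is exponential in $r$.
   Context: A map is a finite, connected, simply connected 2-complex embedded in the plane; $\mathrm{Area}(M)$ is its number of faces, its perimeter is the length of its closed boundary path, and distances are combinatorial distances in the 1-skeleton. Degrees of vertices (number of oriented edges starting there, loops counted twice) and of faces (length of the boundary path) are as usual. A corner of a face $\Pi$ at a vertex $o$ is a pair of consecutive edges $e,f$ of the boundary path of $\Pi$ with $e_+=f_-=o$. An angle function assigns a non-negative real number (angle) to each corner of each face. For a face $\Pi$ of degree $d$, let $\Sigma_\Pi$ be the sum of its corner angles; its curvature is $\Sigma_\Pi-\pi(d-2)$. For a vertex $o$, let $\Sigma_o$ be the sum of angles of all corners at $o$ and $\mu(o)$ the number of times the boundary path of $M$ passes through $o$; its curvature is $(2-\mu(o))\pi-\Sigma_o$. A face or interior vertex is flat if its curvature is $0$, non-flat otherwise. A $(\delta,b)$-map is a map with an angle function such that every non-flat face and every non-flat interior vertex has curvature at most $-\delta$, and every vertex and every face has degree at most $b$. *)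

From HB Require Import structures.
From mathcomp Require Import all_boot all_order all_algebra.
From mathcomp Require Import reals trigo.

Set Implicit Arguments.
Unset Strict Implicit.
Unset Printing Implicit Defensive.

Import Order.TTheory GRing.Theory Num.Theory.

(* A map is encoded as a rooted planar combinatorial map:
   - D       : the darts (oriented edges);
   - alpha   : reversal of orientation (fixed-point free involution);
   - phi     : the face permutation, phi d = the dart following d along the
               boundary path of the face (region) on its side;
   - o0      : a dart of the outer (unbounded) region.
   The tail vertex of a dart d is its orbit under sigma := phi \o alpha;
   the head of d is the tail of alpha d (= tail of phi d).
   Regions are the phi-orbits; the region of o0 is the complement of M in
   the plane, its phi-orbit is the boundary path of M; all other phi-orbits
   are the faces of M. *)

Section MapDefs.
Variables (D : finType) (alpha phi : D -> D) (o0 : D).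

Definition sigma (d : D) : D := phi (alpha d).

Definition same_vertex (x y : D) : bool := fconnect sigma x y.
Definition same_region (x y : D) : bool := fconnect phi x y.

Definition outer (d : D) : bool := same_region o0 d.
Definition inner (d : D) : bool := ~~ outer d.

Definition nverts : nat := fcard sigma predT.
Definition nregions : nat := fcard phi predT.

(* finite, connected, planar (genus 0, Euler: V - E + F = 2 with E = #|D|/2) *)
Definition is_planar_map : Prop :=
  [/\ injective phi,
      involutive alpha,
      (forall d, alpha d != d),
      (forall x y, connect (fun u v => (v == alpha u) || (v == phi u)) x y)
    & (nverts + nregions).*2 = #|D| + 4].

(* Area = number of faces (regions other than the outer one) *)
Definition area : nat := nregions.-1.
Definition perimeter : nat := order phi o0.

Definition vdeg (d : D) : nat := order sigma d.
Definition fdeg (d : D) : nat := order phi d.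

(* mu(o): number of times the boundary path passes through the tail vertex
   of v, i.e. number of outer darts whose head is that vertex *)
Definition mu (v : D) : nat := #|[pred e | outer e & same_vertex v (alpha e)]|.

Variable R : realType.
Variable ang : D -> R.
(* ang e is the angle of the corner (e, phi e) of the face containing e,
   located at the head of e; only used for inner darts e. *)

Local Open Scope ring_scope.

Definition face_angle_sum (d : D) : R := \sum_(e | same_region d e) ang e.
Definition face_curv (d : D) : R :=
  face_angle_sum d - pi * ((fdeg d)%:R - 2).

Definition vertex_angle_sum (v : D) : R :=
  \sum_(e | inner e && same_vertex v (alpha e)) ang e.
Definition vertex_curv (v : D) : R :=
  (2 - (mu v)%:R) * pi - vertex_angle_sum v.

Definition interior_vertex (v : D) : bool := mu v == 0%N.
Definition boundary_vertex (v : D) : bool := (0 < mu v)%N.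

Definition delta_b_map (delta : R) (b : nat) : Prop :=
  [/\ is_planar_map,
      (forall e, inner e -> 0 <= ang e),
      (forall d, inner d -> face_curv d != 0 -> face_curv d <= - delta),
      (forall v, interior_vertex v -> vertex_curv v != 0 ->
                 vertex_curv v <= - delta)
    & (forall v, (vdeg v <= b)%N) /\ (forall d, inner d -> (fdeg d <= b)%N)].

(* within k x y : the tail vertices of x and y are at combinatorial distance
   at most k in the 1-skeleton *)
Fixpoint within (k : nat) (x y : D) : bool :=
  if k is k'.+1 then
    within k' x y || [exists d, same_vertex x d && within k' (alpha d) y]
  else same_vertex x y.

Definition special_vertex (w : D) : Prop :=
  boundary_vertex w \/
  (interior_vertex w /\ vertex_curv w != 0) \/
  (exists d, [&& inner d, face_curv d != 0 & same_vertex w d]).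

End MapDefs.

From Pilot Require Import Defs.
From HB Require Import structures.
From mathcomp Require Import all_boot all_order all_algebra.
From mathcomp Require Import reals trigo.
From mathcomp Require Import ring lra zify.
Import Order.TTheory GRing.Theory Num.Theory.
Local Open Scope ring_scope.

(* Spread the curvature of every face and every vertex evenly over its darts.
   Combinatorial Gauss-Bonnet (Euler's formula) then says that the total
   curvature is 2 pi; a boundary vertex visited mu times by the boundary path
   has curvature at most mu pi, so the boundary contributes at most pi n.  In a
   (delta,b)-map every non-flat face and interior vertex contributes at most
   -delta/b per dart, hence at most (b pi / delta) n darts lie on non-flat faces
   or vertices, and at most b n darts sit at boundary vertices.  A ball of
   radius r contains at most b (b+1)^r darts, and every dart lies in the ball of
   a dart at a special vertex; so the number of darts, which bounds the area,
   is at most b^2 (1 + b pi / delta) (b+1)^r n.  All counts are of darts rather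
   than of vertices or faces, which only costs factors of b. *)

Section OrbitSums.
Variables (R : realType) (T : finType) (f : T -> T).
Hypothesis injf : injective f.

Lemma order_fconnect x y : fconnect f x y -> order f x = order f y.
Proof.
move=> xy; apply: eq_card => z.
exact: (same_connect (fconnect_sym injf) xy).
Qed.

Lemma card_fconnect_to y : #|[pred x | fconnect f x y]| = order f y.
Proof. by apply: eq_card => z; rewrite inE fconnect_sym. Qed.

Lemma order_neq0 x : (order f x)%:R != 0 :> R.
Proof. by rewrite pnatr_eq0 -lt0n order_gt0. Qed.

Lemma sum_orbit_average (P : pred T) (g : T -> T) (h : T -> R) :
  \sum_d (\sum_(e | P e && fconnect f d (g e)) h e) / (order f d)%:R
  = \sum_(e | P e) h e.
Proof.
under eq_bigr do rewrite mulr_suml big_mkcondr.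
rewrite exchange_big; apply: eq_bigr => e _ /=.
rewrite -big_mkcond (eq_bigr (fun _ => h e / (order f (g e))%:R)); last first.
  by move=> d /order_fconnect ->.
rewrite sumr_const (_ : #|_| = order f (g e)) ?card_fconnect_to //.
by rewrite -[_ *+ _]mulr_natr mulfVK ?order_neq0.
Qed.

Lemma sum_inv_order : \sum_d ((order f d)%:R)^-1 = (fcard f predT)%:R :> R.
Proof.
have sym := fconnect_sym injf.
rewrite (partition_big (froot f) (froots f)) /=; last first.
  by move=> d _; exact: (roots_root sym).
rewrite /n_comp_mem -sum1_card natr_sum.
apply: eq_big => [r|r /eqP rr]; first by rewrite !inE andbT.
rewrite (eq_bigr (fun _ => ((order f r)%:R)^-1)); last first.
  by move=> d /eqP <-; rewrite (@order_fconnect d (froot f d)) ?connect_root.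
rewrite (eq_bigl (fconnect f r)); last first.
  by move=> d /=; rewrite -{1}rr (root_connect sym) sym.
by rewrite sumr_const -/(order f r) -[_ *+ _]mulr_natr mulVf ?order_neq0.
Qed.

End OrbitSums.

Arguments sum_orbit_average {R T f}.
Arguments sum_inv_order R {T f}.
Arguments order_neq0 {R T f}.
Arguments order_fconnect {T f} injf {x y}.
Arguments card_fconnect_to {T f} injf y.

Lemma card_exists_le (T U : finType) (P : pred U) (rel : T -> U -> bool) m :
  (forall d, P d -> #|[pred x | rel x d]| <= m)%N ->
  (#|[pred x | [exists d, rel x d && P d]]| <= #|P| * m)%N.
Proof.
move=> relm.
apply: (@leq_trans (\sum_x \sum_(d | P d) rel x d)%N).
  rewrite -sum1_card big_mkcond /=; apply: leq_sum => x _; rewrite inE.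
  by case: existsP => [[d /andP[Rxd Pd]]|_] //; rewrite (bigD1 d) //= Rxd.
rewrite exchange_big (@leq_trans (\sum_(d | P d) m)%N) //; last first.
  by rewrite -sum_nat_const; apply: eq_leq; apply: eq_bigl.
apply: leq_sum => d Pd; apply: leq_trans (relm d Pd).
apply: eq_leq; rewrite -sum1_card [RHS]big_mkcond /=.
by apply: eq_bigr => x _; rewrite inE; case: (rel x d).
Qed.

Lemma card_preim_inj (T : finType) (f : T -> T) (P : pred T) :
  injective f -> #|[pred x | P (f x)]| = #|P|.
Proof.
move=> injf; rewrite -[RHS]cardsE -(card_preimset _ injf).
by apply: eq_card => x; rewrite !inE.
Qed.

Arguments card_preim_inj {T f} P.

Lemma card_predU_le (T : finType) (A B : pred T) :
  (#|[pred x | A x || B x]| <= #|A| + #|B|)%N.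
Proof. by rewrite -cardUI leq_addr. Qed.

Arguments card_predU_le {T}.

Lemma le_div_nat_neg (R : realFieldType) (x delta : R) (k b : nat) :
  0 < delta -> x <= - delta -> (0 < k)%N -> (k <= b)%N ->
  x / k%:R <= - (delta / b%:R).
Proof.
move=> delta_gt0 x_le k_gt0 kb; have b_gt0 := leq_trans k_gt0 kb.
apply: (@le_trans _ _ (- delta / k%:R)); first by rewrite ler_pM2r ?invr_gt0 ?ltr0n.
by rewrite mulNr lerN2 ler_pM2l // lef_pV2 ?posrE ?ltr0n ?ler_nat.
Qed.

Section GaussBonnet.
Variables (R : realType) (D : finType) (alpha phi : D -> D) (o0 : D) (ang : D -> R).
Hypothesis planar : is_planar_map alpha phi.

Local Notation outer := (outer phi o0).
Local Notation inner := (inner phi o0).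
Local Notation fdeg := (fdeg phi).
Local Notation vdeg := (vdeg alpha phi).
Local Notation mu := (mu alpha phi o0).

Lemma injective_phi : injective phi. Proof. by case: planar. Qed.

Lemma injective_sigma : injective (sigma alpha phi).
Proof.
by case: planar => injphi invol *; exact: inj_comp injphi (inv_inj invol).
Qed.

Lemma outer_fconnect {d e} : fconnect phi d e -> outer d = outer e.
Proof.
by move=> de; exact: (same_connect_r (fconnect_sym injective_phi) de o0).
Qed.

Lemma card_outer : #|outer| = perimeter phi o0.
Proof. exact: eq_card. Qed.

Lemma card_inner : (#|inner| + perimeter phi o0)%N = #|D|.
Proof.
by rewrite -card_outer addnC -(cardC outer); congr (_ + _); apply: eq_card.
Qed.

Lemma sum_face_angles :
  \sum_(d | inner d) face_angle_sum phi ang d / (fdeg d)%:R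
  = \sum_(e | inner e) ang e.
Proof.
rewrite -(sum_orbit_average injective_phi inner id ang) [LHS]big_mkcond /=.
apply: eq_bigr => d _.
rewrite (eq_bigl (fun e => inner d && same_region phi d e)); last first.
  move=> e /=; rewrite /same_region; case de: (fconnect phi d e).
    by rewrite !andbT /Defs.inner (outer_fconnect de).
  by rewrite !andbF.
by case: ifP => _; rewrite ?big_pred0_eq ?mul0r.
Qed.

Lemma sum_inv_fdeg_inner :
  \sum_(d | inner d) ((fdeg d)%:R)^-1 = (nregions phi)%:R - 1 :> R.
Proof.
have outer1 : \sum_(d | outer d) ((order phi d)%:R)^-1 = 1 :> R.
  rewrite (eq_bigr (fun _ => ((order phi o0)%:R)^-1)); last first.
    by move=> d /(order_fconnect injective_phi) ->.
  by rewrite sumr_const card_outer -[_ *+ _]mulr_natr mulVf ?order_neq0.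
rewrite -(sum_inv_order R injective_phi) [in RHS](bigID outer) /= outer1.
by rewrite addrAC subrr add0r.
Qed.

Lemma sum_mu_div_vdeg : \sum_d (mu d)%:R / (vdeg d)%:R = (perimeter phi o0)%:R :> R.
Proof.
rewrite -card_outer -sumr_const.
rewrite -(sum_orbit_average injective_sigma outer alpha (fun=> 1)).
by apply: eq_bigr => d _; rewrite sumr_const.
Qed.

Theorem gauss_bonnet :
  \sum_(d | inner d) face_curv phi ang d / (fdeg d)%:R
  + \sum_d vertex_curv alpha phi o0 ang d / (vdeg d)%:R = 2 * pi.
Proof.
case: planar => _ _ _ _ euler.
set SA := \sum_(e | inner e) ang e.
have faces : \sum_(d | inner d) face_curv phi ang d / (fdeg d)%:R
    = SA - pi * #|inner|%:R + 2 * pi * ((nregions phi)%:R - 1).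
  rewrite (eq_bigr (fun d => face_angle_sum phi ang d / (fdeg d)%:R
                             + (2 * pi * ((fdeg d)%:R)^-1 - pi))); last first.
    by move=> d _; rewrite /face_curv; field; rewrite order_neq0.
  rewrite big_split sumrB /= sum_face_angles -mulr_sumr sum_inv_fdeg_inner sumr_const.
  by rewrite -mulr_natr /SA; ring.
have vertices : \sum_d vertex_curv alpha phi o0 ang d / (vdeg d)%:R
    = 2 * pi * (nverts alpha phi)%:R - pi * (perimeter phi o0)%:R - SA.
  rewrite /SA -sum_mu_div_vdeg -(sum_orbit_average injective_sigma inner alpha ang).
  rewrite -(sum_inv_order R injective_sigma) !mulr_sumr -!sumrB.
  apply: eq_bigr => d _; rewrite /vertex_curv /vertex_angle_sum /Defs.vdeg.
  by field; rewrite order_neq0.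
have darts : #|inner|%:R + (perimeter phi o0)%:R = #|D|%:R :> R.
  by rewrite -natrD card_inner.
have {}euler : 2 * ((nverts alpha phi)%:R + (nregions phi)%:R) = #|D|%:R + 4 :> R.
  by rewrite -(natrD _ _ 4) -euler -muln2 natrM natrD mulrC.
rewrite faces vertices.
set V := (nverts _ _)%:R in euler *; set F := (nregions _)%:R in euler *.
set I := #|inner|%:R in darts *; set N := (perimeter _ _)%:R in darts *.
transitivity (pi * (2 * F + 2 * V - 2 - I - N)); first by ring.
have -> : 2 * F + 2 * V - 2 - I - N = 2 by lra.
by rewrite mulrC.
Qed.

End GaussBonnet.

Arguments injective_phi {D alpha phi}.
Arguments injective_sigma {D alpha phi}.
Arguments sum_mu_div_vdeg R {D alpha phi o0}.
Arguments gauss_bonnet {R D alpha phi} o0 ang.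

Section DeltaBMaps.
Variables (R : realType) (delta : R) (b : nat).
Variables (D : finType) (alpha phi : D -> D) (o0 : D) (ang : D -> R).
Hypotheses (delta_gt0 : 0 < delta) (b_gt0 : (0 < b)%N).
Hypothesis dbmap : delta_b_map alpha phi o0 ang delta b.

Local Notation outer := (outer phi o0).
Local Notation inner := (inner phi o0).
Local Notation same_vertex := (same_vertex alpha phi).
Local Notation interior_vertex := (interior_vertex alpha phi o0).
Local Notation boundary_vertex := (boundary_vertex alpha phi o0).
Local Notation face_curv := (face_curv phi ang).
Local Notation vertex_curv := (vertex_curv alpha phi o0 ang).
Local Notation within := (within alpha phi).

Definition nonflat_face d := inner d && (face_curv d != 0).
Definition nonflat_vertex v := interior_vertex v && (vertex_curv v != 0).

Let planar : is_planar_map alpha phi. Proof. by case: dbmap. Qed.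
Let vdeg_le v : (vdeg alpha phi v <= b)%N. Proof. by case: dbmap => _ _ _ _ []. Qed.

Lemma face_curv_sum_le :
  \sum_(d | inner d) face_curv d / (fdeg phi d)%:R
  <= - (delta / b%:R) * #|nonflat_face|%:R.
Proof.
case: dbmap => _ _ face_le _ [_ fdeg_le].
rewrite mulr_natr -sumr_const big_mkcondr /=; apply: ler_sum => d in_d.
case: ifP => [nonflat|/negbFE/eqP->]; last by rewrite mul0r.
by apply: le_div_nat_neg; rewrite ?order_gt0 ?fdeg_le ?face_le.
Qed.

Lemma vertex_curv_boundary_le v :
  boundary_vertex v -> vertex_curv v <= (mu alpha phi o0 v)%:R * pi.
Proof.
case: dbmap => _ ang_ge0 _ _ _; rewrite /Defs.boundary_vertex -(ler1n R) => mu_ge1.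
have angles_ge0 : 0 <= vertex_angle_sum alpha phi o0 ang v.
  by apply: sumr_ge0 => e /andP[/ang_ge0].
rewrite /Defs.vertex_curv; have := pi_ge0 R; nra.
Qed.

Lemma vertex_curv_sum_le :
  \sum_d vertex_curv d / (vdeg alpha phi d)%:R
  <= - (delta / b%:R) * #|nonflat_vertex|%:R + pi * (perimeter phi o0)%:R.
Proof.
case: dbmap => _ _ _ vertex_le _.
rewrite -(sum_mu_div_vdeg R planar) mulr_sumr mulr_natr -sumr_const.
rewrite [\sum_(i in _) _]big_mkcond -big_split.
apply: ler_sum => v _ /=; have vdeg_gt0 : 0 < (vdeg alpha phi v)%:R :> R.
  by rewrite ltr0n order_gt0.
rewrite unfold_in /=; case: (boolP (interior_vertex v)) => /= [interior|boundary].
  rewrite (eqP interior) mul0r mulr0 addr0.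
  case: ifP => [nonflat|/negbFE/eqP->]; last by rewrite mul0r.
  by apply: le_div_nat_neg; rewrite ?order_gt0 ?vdeg_le ?vertex_le.
rewrite add0r mulrA ler_pM2r ?invr_gt0 // mulrC.
by apply: vertex_curv_boundary_le; rewrite /Defs.boundary_vertex lt0n.
Qed.

Lemma card_nonflat_le :
  (#|nonflat_face| + #|nonflat_vertex|)%:R
  <= b%:R * pi / delta * (perimeter phi o0)%:R :> R.
Proof.
have c_gt0 : 0 < delta / b%:R by rewrite divr_gt0 ?ltr0n.
have := gauss_bonnet o0 ang planar.
have := face_curv_sum_le; have := vertex_curv_sum_le; have := pi_gt0 R.
rewrite (_ : b%:R * pi / delta = (delta / b%:R)^-1 * pi); last first.
  by field; rewrite pnatr_eq0 -lt0n b_gt0 gt_eqF.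
rewrite -mulrA ler_pdivlMl // natrD; nra.
Qed.

Lemma card_same_vertex_le (P : pred D) :
  (#|[pred x | [exists d, same_vertex x d && P d]]| <= #|P| * b)%N.
Proof.
apply: card_exists_le => d _.
by rewrite (card_fconnect_to (injective_sigma planar)) vdeg_le.
Qed.

Lemma boundary_vertexE x :
  boundary_vertex x = [exists d, same_vertex x d && outer (alpha d)].
Proof.
case: planar => _ invol _ _ _.
apply/card_gt0P/existsP => -[e].
  by rewrite inE => /andP[out_e xe]; exists (alpha e); rewrite invol out_e andbT.
by case/andP=> xe out_e; exists (alpha e); rewrite inE /= out_e invol.
Qed.

Lemma card_boundary_le : (#|boundary_vertex| <= perimeter phi o0 * b)%N.
Proof.
case: planar => _ invol _ _ _.
rewrite -card_outer -(card_preim_inj outer (inv_inj invol)).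
by rewrite (eq_card boundary_vertexE) card_same_vertex_le.
Qed.

Definition special_dart w :=
  [|| boundary_vertex w, nonflat_vertex w
    | [exists d, same_vertex w d && nonflat_face d]].

Lemma special_vertex_dart w :
  special_vertex alpha phi o0 ang w -> special_dart w.
Proof.
rewrite /special_dart => -[->//|[[interior nonflat]|[d /and3P[in_d nonflat wd]]]].
  by rewrite /nonflat_vertex interior nonflat orbT.
apply/orP; right; apply/orP; right.
by apply/existsP; exists d; rewrite wd /nonflat_face in_d.
Qed.

Lemma card_special_le :
  (#|special_dart|
   <= perimeter phi o0 * b + (#|nonflat_face| + #|nonflat_vertex|) * b)%N.
Proof.
have near_face := card_same_vertex_le nonflat_face.
have boundary := card_boundary_le.
have nonflat_le : (#|nonflat_vertex| <= #|nonflat_vertex| * b)%N by rewrite leq_pmulr.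
apply: leq_trans (card_predU_le boundary_vertex
  (fun w => nonflat_vertex w || [exists d, same_vertex w d && nonflat_face d])) _.
apply: leq_trans (leq_add (leqnn _) (card_predU_le nonflat_vertex
  [pred w | [exists d, same_vertex w d && nonflat_face d]])) _.
apply: leq_trans (leq_add boundary (leq_add nonflat_le near_face)) _.
by rewrite mulnDl (addnC (#|nonflat_face| * b)).
Qed.

Lemma card_within_le k y : (#|[pred x | within k x y]| <= b * b.+1 ^ k)%N.
Proof.
elim: k y => [|k IHk] y.
  by rewrite (card_fconnect_to (injective_sigma planar)) expn0 muln1 vdeg_le.
case: planar => _ invol _ _ _.
have near : (#|[pred x | [exists d, same_vertex x d && within k (alpha d) y]]|
             <= #|[pred x | within k x y]| * b)%N.
  rewrite -[#|[pred x | within k x y]|](card_preim_inj _ (inv_inj invol)).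
  exact: card_same_vertex_le.
apply: leq_trans (card_predU_le (fun x => within k x y)
  (fun x => [exists d, same_vertex x d && within k (alpha d) y])) _.
apply: leq_trans (leq_add (IHk y) (leq_trans near (leq_mul (IHk y) (leqnn b)))) _.
rewrite expnS; nia.
Qed.

Lemma card_darts_le r :
  (forall v, exists w, within r v w /\ special_vertex alpha phi o0 ang w) ->
  (#|D| <= #|special_dart| * (b * b.+1 ^ r))%N.
Proof.
move=> cover.
have -> : #|D| = #|[pred x | [exists w, within r x w && special_dart w]]|.
  apply: eq_card => x; rewrite !inE; symmetry; apply/existsP.
  by have [w [xw /special_vertex_dart sw]] := cover x; exists w; rewrite xw sw.
by apply: card_exists_le => w _; exact: card_within_le.
Qed.

Lemma area_le r :
  (forall v, exists w, within r v w /\ special_vertex alpha phi o0 ang w) ->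
  (area phi)%:R
  <= b%:R ^+ 2 * (1 + b%:R * pi / delta) * b.+1%:R ^+ r * (perimeter phi o0)%:R.
Proof.
move=> cover; set N := (perimeter phi o0)%:R.
have area_le_darts : (area phi <= #|D|)%N.
  by rewrite (leq_trans (leq_pred _)) ?max_card.
have special_le : #|special_dart|%:R <= b%:R * (1 + b%:R * pi / delta) * N.
  have := card_special_le; rewrite -(ler_nat R) natrD !natrM => special_le.
  have := card_nonflat_le; have := pi_gt0 R; have : 0 <= b%:R :> R by [].
  set c := b%:R * pi / delta; nra.
apply: le_trans (_ : (#|special_dart| * (b * b.+1 ^ r))%:R <= _).
  by rewrite ler_nat (leq_trans area_le_darts) ?card_darts_le.
rewrite natrM natrM natrX.
rewrite (_ : _ * _ * _ * N
             = b%:R * (1 + b%:R * pi / delta) * N * (b%:R * b.+1%:R ^+ r)); last by ring.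
by rewrite ler_wpM2r ?mulr_ge0 ?exprn_ge0.
Qed.

End DeltaBMaps.

Arguments area_le {R delta b D alpha phi o0 ang}.

Theorem theorem1p5 (R : realType) (delta : R) (b : nat) :
  0 < delta -> (0 < b)%N ->
  exists K C : R, forall (r : nat) (D : finType) (alpha phi : D -> D) (o0 : D)
    (ang : D -> R),
    delta_b_map alpha phi o0 ang delta b ->
    (forall v : D, exists w : D,
        within alpha phi r v w /\ special_vertex alpha phi o0 ang w) ->
    (area phi)%:R <= K * C ^+ r * (perimeter phi o0)%:R.
Proof.
move=> delta_gt0 b_gt0.
exists (b%:R ^+ 2 * (1 + b%:R * pi / delta)), b.+1%:R.
move=> r D alpha phi o0 ang dbmap.
exact: area_le delta_gt0 b_gt0 dbmap r.
Qed.
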